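(* If $T$ is a decomposable operator on $L^2(\mathbb{D},\mathbb{C}^n)$ with $T^*(L_a^2(\mathbb{D},\mathbb{C}^n))\subseteq L_a^2(\mathbb{D},\mathbb{C}^n)$, then for each fixed $u\in\mathbb{C}^n$ the map $\tilde F:\mathbb{D}\to\mathbb{C}^n$, $\tilde F(\lambda)=T_\lambda^*u$, is holomorphic.
   Context: $L^2(\mathbb{D},\mathbb{C}^n)$ is the space of $\mathbb{C}^n$-valued functions on the unit disc square integrable for area measure; $L_a^2(\mathbb{D},\mathbb{C}^n)$ is its subspace of holomorphic functions. An operator $T$ on $L^2(\mathbb{D},\mathbb{C}^n)$ is decomposable if there is a weakly measurable function $\lambda\mapsto T_\lambda\in\mathcal{L}(\mathbb{C}^n)$ with $(Tf)(\lambda)=T_\lambda f(\lambda)$ for a.e. $\lambda$, for all $f$; then $(T^*f)(\lambda)=T_\lambda^*f(\lambda)$. *)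

From HB Require Import structures.
From mathcomp Require Import all_boot all_order all_algebra.
From mathcomp Require Import all_classical all_reals all_analysis.
From mathcomp Require Import complex.
Set Implicit Arguments.
Unset Strict Implicit.
Unset Printing Implicit Defensive.
Import Order.TTheory GRing.Theory Num.Theory ComplexField.
Import numFieldNormedType.Exports.
Local Open Scope classical_set_scope.
Local Open Scope ring_scope.

Section Defs.
Variable R : realType.

Local Notation Cplx := (R[i])%C.

(** Identification of R x R with C (area measure = product Lebesgue measure). *)
Definition toC (p : R * R) : Cplx := (p.1 +i* p.2)%C.

Definition disc : set Cplx := [set z | `|z| < 1].
Definition discR : set (R * R) := [set p | p.1 ^+ 2 + p.2 ^+ 2 < 1].

Definition area := (@lebesgue_measure R \x @lebesgue_measure R)%E.

Definition vnorm2 (n : nat) (v : 'cV[Cplx]_n) : R :=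
  \sum_(i < n) (complex.Re (v i ord0) ^+ 2 + complex.Im (v i ord0) ^+ 2).

Definition measurable_vfun (n : nat) (f : Cplx -> 'cV[Cplx]_n) : Prop :=
  forall i : 'I_n,
    measurable_fun discR (fun p => complex.Re (f (toC p) i ord0)) /\
    measurable_fun discR (fun p => complex.Im (f (toC p) i ord0)).

Definition L2 (n : nat) (f : Cplx -> 'cV[Cplx]_n) : Prop :=
  measurable_vfun f /\
  (\int[area]_(p in discR) (vnorm2 (f (toC p)))%:E < +oo)%E.

(** f is holomorphic on D: each coordinate is complex differentiable at
    every point of D (derivative along direction 1 in the C-normed space C). *)
Definition holomorphic_on_disc (n : nat) (f : Cplx -> 'cV[Cplx]_n) : Prop :=
  forall (i : 'I_n) (z : Cplx), disc z ->
    derivable ((fun w : Cplx => f w i ord0) : Cplx^o -> Cplx^o) z 1.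

Definition L2a (n : nat) (f : Cplx -> 'cV[Cplx]_n) : Prop :=
  L2 f /\ holomorphic_on_disc f.

Definition ae_disc (n : nat) (f g : Cplx -> 'cV[Cplx]_n) : Prop :=
  {ae area, forall p, discR p -> f (toC p) = g (toC p)}.

Definition adjmx (m n : nat) (A : 'M[Cplx]_(m, n)) : 'M[Cplx]_(n, m) :=
  (map_mx (fun z : Cplx => z^*%C) A)^T.

Definition weakly_measurable (n : nat) (Tl : Cplx -> 'M[Cplx]_n) : Prop :=
  forall x y : 'cV[Cplx]_n,
    measurable_fun discR (fun p => complex.Re (((adjmx y) *m (Tl (toC p) *m x)) ord0 ord0)
                          : R)
    /\ measurable_fun discR
         (fun p => complex.Im (((adjmx y) *m (Tl (toC p) *m x)) ord0 ord0) : R).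

Definition decomposable (n : nat)
    (T : (Cplx -> 'cV[Cplx]_n) -> (Cplx -> 'cV[Cplx]_n))
    (Tl : Cplx -> 'M[Cplx]_n) : Prop :=
  weakly_measurable Tl /\
  forall f, L2 f -> L2 (T f) /\ ae_disc (T f) (fun l => Tl l *m f l).

Definition Tstar_apply (n : nat) (Tl : Cplx -> 'M[Cplx]_n)
    (f : Cplx -> 'cV[Cplx]_n) : Cplx -> 'cV[Cplx]_n :=
  fun l => adjmx (Tl l) *m f l.

(** T^*(L^2_a) is contained in L^2_a: for every f in L^2_a, the element
    T^* f of L^2 has a representative lying in L^2_a. *)
Definition Tstar_preserves_L2a (n : nat) (Tl : Cplx -> 'M[Cplx]_n) : Prop :=
  forall f : Cplx -> 'cV[Cplx]_n,
    L2a f -> exists g, L2a g /\ ae_disc g (Tstar_apply Tl f).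

End Defs.

From HB Require Import structures.
From mathcomp Require Import all_boot all_order all_algebra.
From mathcomp Require Import all_classical all_reals all_analysis.
From mathcomp Require Import complex.
Import Order.TTheory GRing.Theory Num.Theory ComplexField.
Import numFieldNormedType.Exports.
Local Open Scope classical_set_scope.
Local Open Scope ring_scope.

(* The disc has finite area, so every constant function is in L^2_a; applying
   T^* to the constant function u gives lambda |-> T_lambda^* u, which
   therefore agrees a.e. with a holomorphic function. *)

Section Disc.
Variable R : realType.

Lemma measurable_discR :
  measurable (@discR R : set (measurableTypeR R * measurableTypeR R)).
Proof.
have mf : measurable_fun setT
    (fun p : measurableTypeR R * measurableTypeR R => p.1 ^+ 2 + p.2 ^+ 2).
  by apply: measurable_realfun.measurable_funD;
    apply: measurable_realfun.measurable_funX;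
    [exact: measurable_fst | exact: measurable_snd].
have := mf measurableT _ (measurable_itv `]-oo, 1[).
by rewrite setTI; congr measurable; apply/seteqP; split => p;
  rewrite /discR /= in_itv.
Qed.

Lemma discR_sub_square :
  @discR R `<=` [set` `[-1, 1]] `*` [set` `[-1, 1]].
Proof.
have sqr_le1 (x y : R) : x ^+ 2 + y ^+ 2 < 1 -> x \in `[-1, 1].
  move=> h; rewrite in_itv /= -ler_norml -(@ler_pXn2r _ 2) ?nnegrE //.
  rewrite real_normK ?num_real // expr1n; apply: ltW.
  by apply: le_lt_trans h; rewrite lerDl sqr_ge0.
move=> [x y] /= h; split; first exact: sqr_le1 h.
by apply: (sqr_le1 _ x); rewrite addrC.
Qed.

Lemma area_discR_lt_pinfty : (@area R (@discR R) < +oo)%E.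
Proof.
pose I : set (measurableTypeR R) := [set` `[-1, 1]].
have mI : measurable I by exact: measurable_itv.
have le_area := le_measure (@area R) _ _ discR_sub_square.
rewrite !inE in le_area; apply: le_lt_trans (le_area measurable_discR _) _.
  exact: measurableX.
change (@area R (I `*` I) < +oo)%E.
have -> : @area R (I `*` I) = (lebesgue_measure I * lebesgue_measure I)%E.
  exact: product_measure1E.
by rewrite lebesgue_measure_itv /= lte_fin gtrN // -EFinD -EFinM ltry.
Qed.

Lemma L2a_cst (n : nat) (u : 'cV[R[i]]_n) : L2a (fun _ : R[i] => u).
Proof.
split; last by move=> i z _; exact: derivable_cst.
split; first by move=> i; split; exact: measurable_cst.
rewrite (integral_cst _ measurable_discR).
apply: lte_mul_pinfty => //; last exact: area_discR_lt_pinfty.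
by rewrite lee_fin /vnorm2 sumr_ge0 // => i _; rewrite addr_ge0 ?sqr_ge0.
Qed.

End Disc.

Theorem mainTheorem8 (R : realType) (n : nat)
    (T : (R[i] -> 'cV[R[i]]_n) -> (R[i] -> 'cV[R[i]]_n))
    (Tl : R[i] -> 'M[R[i]]_n) :
  decomposable T Tl ->
  Tstar_preserves_L2a Tl ->
  forall u : 'cV[R[i]]_n,
    exists G : R[i] -> 'cV[R[i]]_n,
      holomorphic_on_disc G /\ ae_disc G (fun l => adjmx (Tl l) *m u).
Proof.
move=> _ Tstar_L2a u.
have [G [[_ holG] aeG]] := Tstar_L2a _ (@L2a_cst R n u).
by exists G; split; [exact: holG | exact: aeG].
Qed.
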